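(* In the setting below, let $\varpi:=F^{j(\theta)}-j(F^\theta)$, where $F^{j(\theta)}=\mathrm d(j\circ\theta)-\tfrac12[j\theta,j\theta]_{\widehat L}\in\Gamma(\wedge^2A^*\otimes\widehat L)$. Then $\varpi$ is scalar valued, $\varpi\in\Gamma(\wedge^2A^* )$, and $$\varpi=\langle\mathrm dj,\theta\rangle+\tfrac12\sigma(\theta,\theta)=\langle\mathrm d^\theta j,\theta\rangle-\tfrac12\sigma(\theta,\theta).$$ Its differential $\mathrm d\varpi$ is basic, so $\mathrm d\varpi=\mathsf a^*\eta$ for a unique closed 3-form $\eta\in\Omega^3(N)$, and $$\mathsf a^*\eta=-\langle\mathrm d^\theta j,F^\theta\rangle.$$ Finally, $\iota_\xi\varpi=-\langle\mathrm dj,\xi\rangle$ for all $\xi\in\Gamma(L)$.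
   Context: Let $A\to N$ be a transitive Lie algebroid: a vector bundle with a Lie bracket $[\cdot,\cdot]_A$ on $\Gamma(A)$ and a surjective anchor $\mathsf a\colon A\to TN$ with $[\xi_1,f\xi_2]_A=f[\xi_1,\xi_2]_A+(\mathsf a(\xi_1)f)\xi_2$; $L=\ker\mathsf a$ is a Lie algebra bundle with bracket $[\cdot,\cdot]_L$ the restriction of $[\cdot,\cdot]_A$. An $A$-representation on $\mathcal V\to N$ is a $C^\infty(N)$-linear Lie algebra homomorphism $\xi\mapsto\nabla_\xi\in\mathrm{End}(\Gamma(\mathcal V))$ with $\nabla_\xi(fs)=f\nabla_\xi s+(\mathsf a(\xi)f)s$; duals and tensor products are defined as usual, $N\times\mathbb R$ carries the trivial representation $\nabla_\xi f=\mathsf a(\xi)f$ and $L$ the representation $\nabla_\xi\zeta=[\xi,\zeta]_A$. On $\Gamma(\wedge^kA^*\otimes\mathcal V)$ the differential is $(\mathrm d\phi)(\xi_0,\dots,\xi_k)=\sum_i(-1)^i\nabla_{\xi_i}(\phi(\dots,\widehat{\xi_i},\dots))+\sum_{i<j}(-1)^{i+j}\phi([\xi_i,\xi_j]_A,\dots,\widehat{\xi_i},\dots,\widehat{\xi_j},\dots)$, $\mathcal L_\xi=\iota_\xi\mathrm d+\mathrm d\iota_\xi$; a form is horizontal if its contractions with all sections of $L$ vanish, basic if moreover its Lie derivatives along sections of $L$ vanish. The dual of the anchor gives an injection $\mathsf a^*\colon\Omega(N)\to\Gamma(\wedge A^* )$. A connection is a bundle map $\theta\colon A\to L$ with $\theta|_L=\mathrm{id}$;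 $\mathrm d^\theta\phi$ is $\mathrm d\phi$ evaluated on horizontal components $\xi_i-\theta(\xi_i)$; the curvature is $F^\theta=\mathrm d\theta-\tfrac12[\theta,\theta]_L$, where $\tfrac12[\theta,\theta]_L(\xi,\zeta)=[\theta\xi,\theta\zeta]_L$ (analogously for $[j\theta,j\theta]_{\widehat L}$). Let $0\to N\times\mathbb R\to\widehat L\xrightarrow{p}L\to0$ be a central extension of Lie algebra bundles, where $\widehat L$ carries an $A$-representation $\widehat\nabla$ by derivations of $[\cdot,\cdot]_{\widehat L}$ such that $p\circ\widehat\nabla_\xi=\nabla_\xi\circ p$, $\widehat\nabla$ restricts to the trivial representation on $N\times\mathbb R$, and $\widehat\nabla_\zeta\hat\xi=[\hat\zeta,\hat\xi]_{\widehat L}$ for $\zeta\in\Gamma(L)$ and any lift $\hat\zeta$ of $\zeta$. A splitting is $j\colon L\to\widehat L$ with $p\circ j=\mathrm{id}$; its cocycle is $\sigma(\xi,\zeta)=j([\xi,\zeta]_L)-[j\xi,j\zeta]_{\widehat L}$. We view $j$ as a section of $L^*\otimes\widehat L$ with induced representation; $\mathrm dj$ and $\mathrm d^\theta j$ take values in $A^*\otimes L^*$. For an $L^*$-valued $k$-form $\mu$ and an $L$-valued $l$-form $\nu$, $\langle\mu,\nu\rangle$ is the scalar $(k+l)$-form obtained by wedge product combined with the pairing $L^*\otimes L\to\mathbb R$; $\sigma(\theta,\theta)(\xi,\zeta)=2\sigma(\theta\xi,\theta\zeta)$. *)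

(* Algebraic (Lie--Rinehart) model of a transitive Lie algebroid:
   C   = C^oo(N) (commutative R-algebra of functions),
   TX  = Gamma(TN) (vector fields, acting on C by derivations via act, bracket brX),
   GA  = Gamma(A), GL = Gamma(L), Lh = Gamma(\hat L)  (C-modules of sections).
   Forms of any degree are functions  seq T -> V  (only their values on
   sequences of the relevant length matter). *)
From HB Require Import structures.
From mathcomp Require Import all_boot all_order all_algebra.
Set Implicit Arguments. Unset Strict Implicit. Unset Printing Implicit Defensive.
Import Order.TTheory GRing.Theory Num.Theory.
Local Open Scope ring_scope.

Definition drop_at {T : Type} (i : nat) (s : seq T) : seq T :=
  take i s ++ drop i.+1 s.

Definition dform {C : comNzRingType} {T : zmodType} {V : lmodType C}
  (nab : T -> V -> V) (br : T -> T -> T) (phi : seq T -> V) (s : seq T) : V :=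
  \sum_(i < size s) ((-1) ^+ i) *: nab (nth 0 s i) (phi (drop_at i s))
  + \sum_(i < size s) \sum_(j < size s | (i < j)%N)
      ((-1) ^+ (i + j)) *: phi (br (nth 0 s i) (nth 0 s j)
                                 :: drop_at i (drop_at j s)).

Definition contract {T V : Type} (x : T) (phi : seq T -> V) : seq T -> V :=
  fun s => phi (x :: s).

Definition lieD {C : comNzRingType} {T : zmodType} {V : lmodType C}
  (nab : T -> V -> V) (br : T -> T -> T) (x : T) (phi : seq T -> V) : seq T -> V :=
  fun s => contract x (dform nab br phi) s + dform nab br (contract x phi) s.

Definition is_kform {C : comNzRingType} {T : lmodType C} {V : lmodType C}
  (k : nat) (phi : seq T -> V) : Prop :=
  (forall (s1 s2 : seq T) (c : C) (x y : T), (size s1 + size s2).+1 = k ->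
     phi (s1 ++ (c *: x + y) :: s2) = c *: phi (s1 ++ x :: s2) + phi (s1 ++ y :: s2))
  /\ (forall (s1 s2 s3 : seq T) (x : T), (size s1 + size s2 + size s3).+2 = k ->
     phi (s1 ++ x :: s2 ++ x :: s3) = 0).

Definition Clinear {C : comNzRingType} {U V : lmodType C} (f : U -> V) : Prop :=
  forall (c : C) (x y : U), f (c *: x + y) = c *: f x + f y.

Definition lie_alg {R : fieldType} {C : comAlgType R} {V : lmodType C}
  (br : V -> V -> V) : Prop :=
  (forall x y w, br (x + y) w = br x w + br y w)
  /\ (forall (r : R) x y, br ((r%:A : C) *: x) y = (r%:A : C) *: br x y)
  /\ (forall x y, br x y = - br y x)
  /\ (forall x y w, br x (br y w) + br y (br w x) + br w (br x y) = 0).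

Definition der_action {R : fieldType} {C : comAlgType R} {T : lmodType C}
  (act : T -> C -> C) : Prop :=
  (forall X f g, act X (f + g) = act X f + act X g)
  /\ (forall X (r : R) f, act X (r%:A * f) = r%:A * act X f)
  /\ (forall X f g, act X (f * g) = act X f * g + f * act X g)
  /\ (forall (c : C) X Y f, act (c *: X + Y) f = c * act X f + act Y f).

Definition lie_rinehart {R : fieldType} {C : comAlgType R} {T : lmodType C}
  (br : T -> T -> T) (act : T -> C -> C) : Prop :=
  lie_alg br /\ der_action act
  /\ (forall X Y f, act (br X Y) f = act X (act Y f) - act Y (act X f))
  /\ (forall X Y (f : C), br X (f *: Y) = f *: br X Y + act X f *: Y).

Definition is_rep {R : fieldType} {C : comAlgType R} {TX GA V : lmodType C}
  (act : TX -> C -> C) (brA : GA -> GA -> GA) (anc : GA -> TX)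
  (nab : GA -> V -> V) : Prop :=
  (forall (c : C) x y v, nab (c *: x + y) v = c *: nab x v + nab y v)
  /\ (forall x v w, nab x (v + w) = nab x v + nab x w)
  /\ (forall x (f : C) v, nab x (f *: v) = f *: nab x v + act (anc x) f *: v)
  /\ (forall x y v, nab (brA x y) v = nab x (nab y v) - nab y (nab x v)).

Definition setting {R : fieldType} {C : comAlgType R} {TX GA GL Lh : lmodType C}
  (act : TX -> C -> C) (brX : TX -> TX -> TX)
  (brA : GA -> GA -> GA) (anc : GA -> TX)
  (iota : GL -> GA) (brL : GL -> GL -> GL) (nabL : GA -> GL -> GL)
  (brH : Lh -> Lh -> Lh) (p : Lh -> GL) (z : C -> Lh) (nabH : GA -> Lh -> Lh)
  (theta : GA -> GL) (j : GL -> Lh) : Prop :=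
  lie_rinehart brX act
  /\ lie_rinehart brA (fun x => act (anc x))
  /\ Clinear anc
  /\ (forall X, exists x, anc x = X)
  /\ (forall x y, anc (brA x y) = brX (anc x) (anc y))
  /\ Clinear iota /\ injective iota
  /\ (forall x, anc x = 0 <-> exists l, x = iota l)
  /\ (forall l m, iota (brL l m) = brA (iota l) (iota m))
  /\ (forall x l, iota (nabL x l) = brA x (iota l))
  (* central extension 0 -> N x R -> \hat L -> L -> 0 of Lie algebra bundles *)
  /\ lie_alg brH
  /\ (forall (c : C) h k, brH (c *: h) k = c *: brH h k)
  /\ Clinear p /\ (forall l, exists h, p h = l)
  /\ (forall h k, p (brH h k) = brL (p h) (p k))
  /\ Clinear (z : C^o -> Lh) /\ injective z
  /\ (forall h, p h = 0 <-> exists f, h = z f)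
  /\ (forall f h, brH (z f) h = 0)
  /\ is_rep act brA anc nabH
  /\ (forall x h k, nabH x (brH h k) = brH (nabH x h) k + brH h (nabH x k))
  /\ (forall x h, p (nabH x h) = nabL x (p h))
  /\ (forall x f, nabH x (z f) = z (act (anc x) f))
  /\ (forall l hl h, p hl = l -> nabH (iota l) h = brH hl h)
  /\ Clinear theta /\ (forall l, theta (iota l) = l)
  /\ Clinear j /\ (forall l, p (j l) = l).

Section Objects.
Context {R : fieldType} {C : comAlgType R} {TX GA GL Lh : lmodType C}
  (act : TX -> C -> C) (brX : TX -> TX -> TX)
  (brA : GA -> GA -> GA) (anc : GA -> TX)
  (iota : GL -> GA) (brL : GL -> GL -> GL) (nabL : GA -> GL -> GL)
  (brH : Lh -> Lh -> Lh) (p : Lh -> GL) (z : C -> Lh) (nabH : GA -> Lh -> Lh)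
  (theta : GA -> GL) (j : GL -> Lh).

Definition theta1 : seq GA -> GL := fun s => theta (nth 0 s 0).
Definition jtheta1 : seq GA -> Lh := fun s => j (theta (nth 0 s 0)).

Definition Ftheta : seq GA -> GL := fun s =>
  dform nabL brA theta1 s - brL (theta (nth 0 s 0)) (theta (nth 0 s 1)).

Definition Fjtheta : seq GA -> Lh := fun s =>
  dform nabH brA jtheta1 s - brH (j (theta (nth 0 s 0))) (j (theta (nth 0 s 1))).

Definition varpi : seq GA -> Lh := fun s => Fjtheta s - j (Ftheta s).

Definition sigma (l m : GL) : Lh := j (brL l m) - brH (j l) (j m).

Definition dj (x : GA) (l : GL) : Lh := nabH x (j l) - j (nabL x l).
(* d^theta j : dj evaluated on the horizontal component of x *)
Definition dthj (x : GA) (l : GL) : Lh := dj (x - iota (theta x)) l.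

Definition pair11 (mu : GA -> GL -> Lh) (nu : seq GA -> GL) : seq GA -> Lh :=
  fun s => mu (nth 0 s 0) (nu [:: nth 0 s 1]) - mu (nth 0 s 1) (nu [:: nth 0 s 0]).
Definition pair12 (mu : GA -> GL -> Lh) (nu : seq GA -> GL) : seq GA -> Lh :=
  fun s => mu (nth 0 s 0) (nu [:: nth 0 s 1; nth 0 s 2])
         - mu (nth 0 s 1) (nu [:: nth 0 s 0; nth 0 s 2])
         + mu (nth 0 s 2) (nu [:: nth 0 s 0; nth 0 s 1]).

Definition half_sigma_tt : seq GA -> Lh :=
  fun s => sigma (theta (nth 0 s 0)) (theta (nth 0 s 1)).

Definition dA (phi : seq GA -> C^o) : seq GA -> C^o :=
  dform (fun x (f : C^o) => (act (anc x) f : C^o)) brA phi.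
Definition dN (phi : seq TX -> C^o) : seq TX -> C^o :=
  dform (fun X (f : C^o) => (act X f : C^o)) brX phi.
Definition lieA (x : GA) (phi : seq GA -> C^o) : seq GA -> C^o :=
  lieD (fun y (f : C^o) => (act (anc y) f : C^o)) brA x phi.

Definition apull (eta : seq TX -> C^o) : seq GA -> C^o := fun s => eta (map anc s).

End Objects.

From HB Require Import structures.
From mathcomp Require Import all_boot all_order all_algebra.
From Stdlib Require Import IndefiniteDescription.
Set Implicit Arguments. Unset Strict Implicit. Unset Printing Implicit Defensive.
Import Order.TTheory GRing.Theory Num.Theory.
Local Open Scope ring_scope.

(* The projection p kills dj and the cocycle sigma, so varpi takes its values
   in the central line z(C).  Expanding the Chevalley--Eilenberg differentials,
     varpi(a,b) = dj_a(theta b) - dj_b(theta a) + sigma(theta a, theta b),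
   which gives both pairing formulas and iota_l varpi = - dj(., l).  The
   \hat L-valued 3-form d varpi vanishes as soon as one argument is vertical,
   because L acts on \hat L by inner derivations ad(j l); hence it only sees
   horizontal parts, where F^theta(a,b) = - theta [hor a, hor b] turns it into
   - <d^theta j, F^theta>, a manifestly C-multilinear expression.  Being
   multilinear, alternating and blind to ker a, d varpi descends along the
   surjective anchor to a 3-form eta on N, closed since d d varpi = 0 and
   unique since a is onto. *)

(* zmod_cancel decides equalities between signed sums of atoms in a zmodType:
   the difference of both sides is reified over a list of atoms and every
   integer coefficient is checked to vanish by computation. *)
Inductive zexpr := ZAtom of nat | ZAdd of zexpr & zexpr | ZOpp of zexpr | ZZero.

Fixpoint zeval (M : zmodType) (env : seq M) (e : zexpr) : M :=
  match e with
  | ZAtom n => env`_n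
  | ZAdd a b => zeval env a + zeval env b
  | ZOpp a => - zeval env a
  | ZZero => 0
  end.

Fixpoint zcoef (e : zexpr) (k : nat) : int :=
  match e with
  | ZAtom n => (k == n)%:Z
  | ZAdd a b => zcoef a k + zcoef b k
  | ZOpp a => - zcoef a k
  | ZZero => 0
  end.

Lemma zevalE (M : zmodType) (env : seq M) e :
  zeval env e = \sum_(k < size env) env`_k *~ zcoef e k.
Proof.
elim: e => [n|a IHa b IHb|a IHa|] /=.
- case: (ltnP n (size env)) => [lt_n | le_n].
    rewrite (bigD1 (Ordinal lt_n)) //= eqxx mulr1z big1 ?addr0 // => k.
    by rewrite -val_eqE /= => /negbTE ->.
  rewrite nth_default // big1 // => k _.
  by rewrite ltn_eqF ?mulr0z // (leq_trans (ltn_ord k)).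
- by rewrite IHa IHb -big_split; apply: eq_bigr => k _; rewrite mulrzDr.
- by rewrite IHa -sumrN; apply: eq_bigr => k _; rewrite mulrNz.
- by rewrite big1 // => k _; rewrite mulr0z.
Qed.

Lemma zeval_eq0 (M : zmodType) (env : seq M) e :
  all (fun k => zcoef e k == 0) (iota 0 (size env)) -> zeval env e = 0.
Proof.
move=> /allP coef0; rewrite zevalE big1 // => k _.
by rewrite (eqP (coef0 k _)) ?mulr0z // mem_iota add0n ltn_ord.
Qed.

(* Atoms are identified up to conversion: the same atom may carry different
   (convertible) type annotations after rewriting. *)
Ltac zinsert x l := lazymatch l with
  | nil => constr:(x :: nil)
  | ?y :: ?r => match l with
      | _ => let _ := constr:(erefl x : x = y) in l
      | _ => let r' := zinsert x r in constr:(y :: r')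
      end
  end.

Ltac zatoms e acc := lazymatch e with
  | GRing.add ?a ?b => let acc' := zatoms a acc in zatoms b acc'
  | GRing.opp ?a => zatoms a acc
  | GRing.zero => acc
  | _ => zinsert e acc
  end.

Ltac zindex x l := lazymatch l with
  | ?y :: ?r => match l with
      | _ => let _ := constr:(erefl x : x = y) in constr:(0%N)
      | _ => let n := zindex x r in constr:(n.+1)
      end
  end.

Ltac zreify e env := lazymatch e with
  | GRing.add ?a ?b =>
      let ra := zreify a env in let rb := zreify b env in constr:(ZAdd ra rb)
  | GRing.opp ?a => let ra := zreify a env in constr:(ZOpp ra)
  | GRing.zero => constr:(ZZero)
  | _ => let n := zindex e env in constr:(ZAtom n)
  end.

Ltac zmod_cancel :=
  apply/eqP; rewrite -subr_eq0; apply/eqP;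
  lazymatch goal with |- ?e = 0 =>
    let M := type of e in
    let env := zatoms e (@nil M) in
    let r := zreify e env in
    exact (@zeval_eq0 _ env r erefl)
  end.

Lemma size2E (T : Type) (x0 : T) s : size s = 2%N -> s = [:: nth x0 s 0; nth x0 s 1].
Proof. by case: s => [|a [|b [|c s]]]. Qed.

Lemma size3E (T : Type) (x0 : T) s :
  size s = 3%N -> s = [:: nth x0 s 0; nth x0 s 1; nth x0 s 2].
Proof. by case: s => [|a [|b [|c [|d s]]]]. Qed.

Section Additive.
Variables (U V : zmodType) (f : U -> V).
Hypothesis fD : forall x y, f (x + y) = f x + f y.

Lemma additive0 : f 0 = 0.
Proof. by apply: (@addrI _ (f 0)); rewrite -fD !addr0. Qed.

Lemma additiveN x : f (- x) = - f x.
Proof. by apply/eqP; rewrite -addr_eq0 -fD addNr additive0. Qed.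

End Additive.

Section ClinearTheory.
Variables (C : comNzRingType) (U V : lmodType C) (f : U -> V).
Hypothesis f_lin : Clinear f.

Lemma ClinearD x y : f (x + y) = f x + f y.
Proof. by have := f_lin 1 x y; rewrite !scale1r. Qed.

Lemma Clinear0 : f 0 = 0.
Proof. exact: additive0 ClinearD. Qed.

Lemma ClinearN x : f (- x) = - f x.
Proof. exact: (additiveN ClinearD). Qed.

Lemma ClinearB x y : f (x - y) = f x - f y.
Proof. by rewrite ClinearD ClinearN. Qed.

Lemma ClinearZ c x : f (c *: x) = c *: f x.
Proof. by have := f_lin c x 0; rewrite !addr0 Clinear0 addr0. Qed.

End ClinearTheory.

Lemma twice_eq0 (R : numFieldType) (C : comAlgType R) (M : lmodType C) (x : M) :
  x + x = 0 -> x = 0.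
Proof.
move=> xx0; have half : (2^-1 : R)%:A + (2^-1 : R)%:A = 1 :> C.
  by rewrite -scalerDl (_ : _ + _ = 1) ?scale1r // [RHS]splitr mul1r.
by rewrite -[x]scale1r -half scalerDl -scalerDr xx0 scaler0.
Qed.

Section LieAlgebra.
Variables (R : numFieldType) (C : comAlgType R) (V : lmodType C) (br : V -> V -> V).
Hypothesis br_lie : lie_alg br.

Lemma lieDl x y w : br (x + y) w = br x w + br y w.
Proof. by case: br_lie. Qed.

Lemma lieC x y : br x y = - br y x.
Proof. by case: br_lie => _ [_ []]. Qed.

Lemma lieJ x y w : br x (br y w) + br y (br w x) + br w (br x y) = 0.
Proof. by case: br_lie => _ [_ []]. Qed.

Lemma lieDr w x y : br w (x + y) = br w x + br w y.
Proof. by rewrite lieC lieDl opprD -!lieC. Qed.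

Lemma lieNr y x : br y (- x) = - br y x.
Proof. exact: (additiveN (lieDr y)). Qed.

Lemma lie0l y : br 0 y = 0.
Proof. exact: (additive0 (fun u v => lieDl u v y)). Qed.

Lemma liexx x : br x x = 0.
Proof. by apply: twice_eq0; rewrite {1}lieC addNr. Qed.

Lemma lie_leibniz x y w : br (br x y) w = br x (br y w) - br y (br x w).
Proof.
apply/eqP; rewrite -subr_eq0 -oppr_eq0 -(lieJ x y w) (lieC w (br x y)) (lieC w x) lieNr.
by apply/eqP; zmod_cancel.
Qed.

End LieAlgebra.

Section ChevalleyEilenberg.
Variables (C : comNzRingType) (T : zmodType) (V : lmodType C).
Variables (nab : T -> V -> V) (br : T -> T -> T).

Ltac dform_expand := rewrite /dform /= (eq_bigr _ (fun i _ => big_mkcond _ _));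
  rewrite !big_ord_recl !big_ord0 /= /bump /= /drop_at /= ?(expr0, exprS);
  rewrite ?(mulr1, mulrN1, mulN1r, opprK, scale1r, scaleN1r, addr0, add0r, scaler0).

Lemma dform2 (phi : seq T -> V) a b :
  dform nab br phi [:: a; b] = nab a (phi [:: b]) - nab b (phi [:: a]) - phi [:: br a b].
Proof. by dform_expand. Qed.

Lemma dform3 (phi : seq T -> V) a b c :
  dform nab br phi [:: a; b; c] =
  nab a (phi [:: b; c]) - nab b (phi [:: a; c]) + nab c (phi [:: a; b])
  - phi [:: br a b; c] + phi [:: br a c; b] - phi [:: br b c; a].
Proof. dform_expand; zmod_cancel. Qed.

Lemma dform4 (phi : seq T -> V) a b c d :
  dform nab br phi [:: a; b; c; d] =
  nab a (phi [:: b; c; d]) - nab b (phi [:: a; c; d]) + nab c (phi [:: a; b; d])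
  - nab d (phi [:: a; b; c])
  - phi [:: br a b; c; d] + phi [:: br a c; b; d] - phi [:: br a d; b; c]
  - phi [:: br b c; a; d] + phi [:: br b d; a; c] - phi [:: br c d; a; b].
Proof. dform_expand; zmod_cancel. Qed.

Hypothesis nabD : forall x u v, nab x (u + v) = nab x u + nab x v.
Hypothesis nab_br : forall x y v, nab (br x y) v = nab x (nab y v) - nab y (nab x v).
Hypothesis brDl : forall x y w, br (x + y) w = br x w + br y w.
Hypothesis brC : forall x y, br x y = - br y x.
Hypothesis brJ : forall x y w, br x (br y w) + br y (br w x) + br w (br x y) = 0.

Lemma dformK2 (phi : seq T -> V) a b c d :
  (forall x y w, phi [:: x + y; w] = phi [:: x; w] + phi [:: y; w]) ->
  (forall x y, phi [:: x; y] = - phi [:: y; x]) ->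
  dform nab br (dform nab br phi) [:: a; b; c; d] = 0.
Proof.
move=> phiD phiC.
have nabN x u : nab x (- u) = - nab x u by apply: additiveN.
have brN y x : br (- x) y = - br x y by exact: (additiveN (fun u v => brDl u v y)).
have brJl x y w : br (br x w) y = br (br x y) w + br (br y w) x.
  have := brJ x y w.
  rewrite (brC x (br y w)) (brC y (br w x)) (brC w (br x y)) (brC w x) brN opprK.
  by move=> J; apply/eqP; rewrite -subr_eq0 -J; apply/eqP; zmod_cancel.
rewrite dform4 !dform3 !nab_br !(nabD, nabN).
rewrite (brJl a b c) (brJl a b d) (brJl a c d) (brJl b c d) !phiD.
rewrite (phiC (br c d) (br a b)) (phiC (br b d) (br a c)) (phiC (br b c) (br a d)).
zmod_cancel.
Qed.

End ChevalleyEilenberg.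

Section WedgePairing.
Variables (R : fieldType) (C : comAlgType R) (A L V : lmodType C).
Variables (mu : A -> L -> V) (nu : seq A -> L).
Hypothesis mu_linl : forall l, Clinear (mu^~ l).
Hypothesis mu_linr : forall x, Clinear (mu x).
Hypothesis nu_lin0 : forall b, Clinear (fun x => nu [:: x; b]).

Lemma pair12_linear0 c x y b e :
  pair12 mu nu [:: c *: x + y; b; e] =
  c *: pair12 mu nu [:: x; b; e] + pair12 mu nu [:: y; b; e].
Proof.
rewrite /pair12 /= (mu_linl _ c x y) (nu_lin0 b c x y) (nu_lin0 e c x y).
rewrite !(ClinearD (mu_linr _), ClinearZ (mu_linr _)) !(scalerDr, scalerN, opprD).
zmod_cancel.
Qed.

End WedgePairing.

Section CentralExtension.
Variables (R : numFieldType) (C : comAlgType R) (TX GA GL Lh : lmodType C)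
  (act : TX -> C -> C) (brX : TX -> TX -> TX)
  (brA : GA -> GA -> GA) (anc : GA -> TX)
  (iota : GL -> GA) (brL : GL -> GL -> GL) (nabL : GA -> GL -> GL)
  (brH : Lh -> Lh -> Lh) (p : Lh -> GL) (z : C -> Lh) (nabH : GA -> Lh -> Lh)
  (theta : GA -> GL) (j : GL -> Lh).
Hypothesis Hset : setting act brX brA anc iota brL nabL brH p z nabH theta j.

Ltac from_setting :=
  let H := fresh in have H := Hset; rewrite /setting in H; decompose [and] H; assumption.

Let A_LR : lie_rinehart brA (fun x => act (anc x)). Proof. from_setting. Qed.
Let anc_lin : Clinear anc. Proof. from_setting. Qed.
Let anc_onto : forall X, exists x, anc x = X. Proof. from_setting. Qed.
Let anc_br : forall x y, anc (brA x y) = brX (anc x) (anc y). Proof. from_setting. Qed.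
Let iota_lin : Clinear iota. Proof. from_setting. Qed.
Let iota_inj : injective iota. Proof. from_setting. Qed.
Let ker_anc : forall x, anc x = 0 <-> exists l, x = iota l. Proof. from_setting. Qed.
Let iota_brL : forall l m, iota (brL l m) = brA (iota l) (iota m). Proof. from_setting. Qed.
Let iota_nabL : forall x l, iota (nabL x l) = brA x (iota l). Proof. from_setting. Qed.
Let Lh_lie : lie_alg brH. Proof. from_setting. Qed.
Let brHZl : forall (c : C) h k, brH (c *: h) k = c *: brH h k. Proof. from_setting. Qed.
Let p_lin : Clinear p. Proof. from_setting. Qed.
Let p_brH : forall h k, p (brH h k) = brL (p h) (p k). Proof. from_setting. Qed.
Let z_lin : Clinear (z : C^o -> Lh). Proof. from_setting. Qed.
Let z_inj : injective z. Proof. from_setting. Qed.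
Let ker_p : forall h, p h = 0 <-> exists f, h = z f. Proof. from_setting. Qed.
Let z_central : forall f h, brH (z f) h = 0. Proof. from_setting. Qed.
Let nabH_rep : is_rep act brA anc nabH. Proof. from_setting. Qed.
Let p_nabH : forall x h, p (nabH x h) = nabL x (p h). Proof. from_setting. Qed.
Let nabH_z : forall x f, nabH x (z f) = z (act (anc x) f). Proof. from_setting. Qed.
Let nabH_iota : forall l hl h, p hl = l -> nabH (iota l) h = brH hl h.
Proof. from_setting. Qed.
Let theta_lin : Clinear theta. Proof. from_setting. Qed.
Let theta_iota : forall l, theta (iota l) = l. Proof. from_setting. Qed.
Let j_lin : Clinear j. Proof. from_setting. Qed.
Let p_j : forall l, p (j l) = l. Proof. from_setting. Qed.

Let A_lie : lie_alg brA. Proof. by case: A_LR. Qed.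

Lemma brAZr x (f : C) y : brA x (f *: y) = f *: brA x y + act (anc x) f *: y.
Proof. by case: A_LR => _ [_ [_ ]]. Qed.

Lemma actD x f g : act (anc x) (f + g) = act (anc x) f + act (anc x) g.
Proof. by case: A_LR => _ [[]]. Qed.

Lemma act_br x y f :
  act (anc (brA x y)) f = act (anc x) (act (anc y) f) - act (anc y) (act (anc x) f).
Proof. by case: A_LR => _ [_ []]. Qed.

Lemma act0 x : act (anc x) 0 = 0.
Proof. exact: (additive0 (actD x)). Qed.

Lemma anc_iota l : anc (iota l) = 0.
Proof. by apply/ker_anc; exists l. Qed.

Lemma act_iota l f : act (anc (iota l)) f = 0.
Proof.
have [_ [[_ [_ [_ actL]]] _]] := A_LR.
have actDl x y : act (anc (x + y)) f = act (anc x) f + act (anc y) f.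
  by have := actL 1 x y f; rewrite scale1r mul1r.
by rewrite anc_iota -(Clinear0 anc_lin) (additive0 actDl).
Qed.

Lemma brAZl (f : C) x y : brA (f *: x) y = f *: brA x y - act (anc y) f *: x.
Proof. by rewrite (lieC A_lie) brAZr opprD -scalerN -(lieC A_lie). Qed.

Lemma brA_iotaZr l (f : C) y : brA (iota l) (f *: y) = f *: brA (iota l) y.
Proof. by rewrite brAZr act_iota scale0r addr0. Qed.

Lemma brAZl_iota l (f : C) y : brA (f *: y) (iota l) = f *: brA y (iota l).
Proof. by rewrite brAZl act_iota scale0r subr0. Qed.

Lemma nabLDl x y l : nabL (x + y) l = nabL x l + nabL y l.
Proof. by apply: iota_inj; rewrite (ClinearD iota_lin) !iota_nabL (lieDl A_lie). Qed.

Lemma nabLZl c x l : nabL (c *: x) l = c *: nabL x l.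
Proof. by apply: iota_inj; rewrite (ClinearZ iota_lin) !iota_nabL brAZl_iota. Qed.

Lemma nabLDr x l m : nabL x (l + m) = nabL x l + nabL x m.
Proof. by apply: iota_inj; rewrite !(ClinearD iota_lin, iota_nabL) (lieDr A_lie). Qed.

Lemma nabLZr x c l : nabL x (c *: l) = c *: nabL x l + act (anc x) c *: l.
Proof.
by apply: iota_inj; rewrite !(ClinearD iota_lin, ClinearZ iota_lin, iota_nabL) brAZr.
Qed.

Lemma nabL_iota m l : nabL (iota m) l = brL m l.
Proof. by apply: iota_inj; rewrite iota_nabL iota_brL. Qed.

Lemma nabL_br x y l : nabL (brA x y) l = nabL x (nabL y l) - nabL y (nabL x l).
Proof. by apply: iota_inj; rewrite (ClinearB iota_lin) !iota_nabL (lie_leibniz A_lie). Qed.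

Lemma L_lie : lie_alg brL.
Proof.
split; [|split; [|split]].
- move=> l m n; apply: iota_inj.
  by rewrite !(ClinearD iota_lin, iota_brL) (lieDl A_lie).
- move=> r l m; apply: iota_inj.
  by rewrite !(ClinearZ iota_lin, iota_brL) brAZl_iota.
- move=> l m; apply: iota_inj.
  by rewrite (ClinearN iota_lin) !iota_brL (lieC A_lie).
- move=> l m n; apply: iota_inj.
  by rewrite !(ClinearD iota_lin, iota_brL) (Clinear0 iota_lin) (lieJ A_lie).
Qed.

Lemma brLZr c l m : brL l (c *: m) = c *: brL l m.
Proof. by apply: iota_inj; rewrite !(ClinearZ iota_lin, iota_brL) brA_iotaZr. Qed.

Lemma brLZl c l m : brL (c *: l) m = c *: brL l m.
Proof. by rewrite (lieC L_lie) brLZr -scalerN -(lieC L_lie). Qed.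

Lemma brH_zr f h : brH h (z f) = 0.
Proof. by rewrite (lieC Lh_lie) z_central oppr0. Qed.

Lemma nabHDl x y v : nabH (x + y) v = nabH x v + nabH y v.
Proof. by case: nabH_rep => nabHL _; have := nabHL 1 x y v; rewrite !scale1r. Qed.

Lemma nabHZl c x v : nabH (c *: x) v = c *: nabH x v.
Proof.
case: nabH_rep => nabHL _; have := nabHL c x 0 v.
by rewrite !addr0 (additive0 (fun a b => nabHDl a b v)) addr0.
Qed.

Lemma nabHDr x v w : nabH x (v + w) = nabH x v + nabH x w.
Proof. by case: nabH_rep => _ []. Qed.

Lemma nabHZr x (f : C) v : nabH x (f *: v) = f *: nabH x v + act (anc x) f *: v.
Proof. by case: nabH_rep => _ [_ []]. Qed.

Lemma nabH0r x : nabH x 0 = 0.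
Proof. exact: (additive0 (nabHDr x)). Qed.

Lemma nabHNr x v : nabH x (- v) = - nabH x v.
Proof. exact: (additiveN (nabHDr x)). Qed.

Lemma nabH_br x y v : nabH (brA x y) v = nabH x (nabH y v) - nabH y (nabH x v).
Proof. by case: nabH_rep => _ [_ [_ ]]. Qed.

Lemma nabH_iota_j m h : nabH (iota m) h = brH (j m) h.
Proof. exact: nabH_iota (p_j m). Qed.

Local Notation DJ := (dj nabL nabH j).
Local Notation SIG := (sigma brL brH j).
Local Notation vp a b := (varpi brA brL nabL brH nabH theta j [:: a; b]).

Lemma djDl x y l : DJ (x + y) l = DJ x l + DJ y l.
Proof. rewrite /dj nabHDl nabLDl (ClinearD j_lin); zmod_cancel. Qed.

Lemma djZl c x l : DJ (c *: x) l = c *: DJ x l.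
Proof. by rewrite /dj nabHZl nabLZl (ClinearZ j_lin) scalerBr. Qed.

Lemma djNl x l : DJ (- x) l = - DJ x l.
Proof. exact: (additiveN (fun a b => djDl a b l)). Qed.

Lemma djDr x l m : DJ x (l + m) = DJ x l + DJ x m.
Proof. rewrite /dj (ClinearD j_lin) nabHDr nabLDr (ClinearD j_lin); zmod_cancel. Qed.

Lemma djZr x c l : DJ x (c *: l) = c *: DJ x l.
Proof.
rewrite /dj (ClinearZ j_lin) nabHZr nabLZr (ClinearD j_lin) !(ClinearZ j_lin) scalerBr.
zmod_cancel.
Qed.

Lemma dj0r x : DJ x 0 = 0.
Proof. exact: (additive0 (djDr x)). Qed.

Lemma djNr x l : DJ x (- l) = - DJ x l.
Proof. exact: (additiveN (djDr x)). Qed.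

Lemma dj_iota m l : DJ (iota m) l = - SIG m l.
Proof. rewrite /dj /sigma nabH_iota_j nabL_iota; zmod_cancel. Qed.

Lemma sigmaC l m : SIG l m = - SIG m l.
Proof. rewrite /sigma (lieC L_lie) (ClinearN j_lin) (lieC Lh_lie (j l)); zmod_cancel. Qed.

Lemma sigmaDl l m n : SIG (l + m) n = SIG l n + SIG m n.
Proof. rewrite /sigma (lieDl L_lie) !(ClinearD j_lin) (lieDl Lh_lie); zmod_cancel. Qed.

Lemma sigmaDr n l m : SIG n (l + m) = SIG n l + SIG n m.
Proof. by rewrite sigmaC sigmaDl opprD -!sigmaC. Qed.

Lemma sigmaZl c l m : SIG (c *: l) m = c *: SIG l m.
Proof. by rewrite /sigma brLZl !(ClinearZ j_lin) brHZl scalerBr. Qed.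

Lemma sigma0l l : SIG 0 l = 0.
Proof. exact: (additive0 (fun a b => sigmaDl a b l)). Qed.

Lemma sigma0r l : SIG l 0 = 0.
Proof. exact: (additive0 (sigmaDr l)). Qed.

Lemma sigmaxx l : SIG l l = 0.
Proof. by rewrite /sigma (liexx L_lie) (Clinear0 j_lin) (liexx Lh_lie) subr0. Qed.

Lemma varpiE a b : vp a b = DJ a (theta b) - DJ b (theta a) + SIG (theta a) (theta b).
Proof.
rewrite /varpi /Fjtheta /Ftheta !dform2 /jtheta1 /theta1 /= /dj /sigma.
rewrite !(ClinearD j_lin, ClinearN j_lin); zmod_cancel.
Qed.

Lemma varpiDl x y b : vp (x + y) b = vp x b + vp y b.
Proof. rewrite !varpiE !(ClinearD theta_lin, djDl, djDr, sigmaDl); zmod_cancel. Qed.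

Lemma varpiZl c x b : vp (c *: x) b = c *: vp x b.
Proof.
rewrite !varpiE !(ClinearZ theta_lin, djZl, djZr, sigmaZl) !(scalerDr, scalerN).
zmod_cancel.
Qed.

Lemma varpiNl x b : vp (- x) b = - vp x b.
Proof. exact: (additiveN (fun u v => varpiDl u v b)). Qed.

Lemma varpiC a b : vp a b = - vp b a.
Proof. rewrite !varpiE (sigmaC (theta b)); zmod_cancel. Qed.

Lemma varpiDr b x y : vp b (x + y) = vp b x + vp b y.
Proof. by rewrite varpiC varpiDl opprD -!varpiC. Qed.

Lemma varpiZr b c x : vp b (c *: x) = c *: vp b x.
Proof. by rewrite varpiC varpiZl -scalerN -varpiC. Qed.

Lemma varpixx a : vp a a = 0.
Proof. by rewrite varpiE sigmaxx subrr addr0. Qed.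

Lemma varpi_iota l x : vp (iota l) x = - DJ x l.
Proof. rewrite varpiE theta_iota dj_iota; zmod_cancel. Qed.

Lemma p_varpi a b : p (vp a b) = 0.
Proof. rewrite varpiE /dj /sigma !(ClinearD p_lin, ClinearN p_lin, p_nabH, p_brH, p_j); zmod_cancel. Qed.

Lemma varpi_central a b : exists f : C, z f = vp a b.
Proof. by have [/(_ (p_varpi a b)) [f ->] _] := ker_p (vp a b); exists f. Qed.

Definition w2 a b : C := proj1_sig (constructive_indefinite_description _ (varpi_central a b)).

Lemma z_w2 a b : z (w2 a b) = vp a b.
Proof. exact: proj2_sig (constructive_indefinite_description _ (varpi_central a b)). Qed.

Definition w : seq GA -> C^o := fun s => w2 s`_0 s`_1.

Lemma w2Dl x y b : w2 (x + y) b = w2 x b + w2 y b.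
Proof. by apply: z_inj; rewrite (ClinearD z_lin) !z_w2 varpiDl. Qed.

Lemma w2Dr b x y : w2 b (x + y) = w2 b x + w2 b y.
Proof. by apply: z_inj; rewrite (ClinearD z_lin) !z_w2 varpiDr. Qed.

Lemma w2Zl c x b : w2 (c *: x) b = c * w2 x b.
Proof. by apply: z_inj; rewrite (ClinearZ z_lin (c : C^o)) !z_w2 varpiZl. Qed.

Lemma w2Zr b c x : w2 b (c *: x) = c * w2 b x.
Proof. by apply: z_inj; rewrite (ClinearZ z_lin (c : C^o)) !z_w2 varpiZr. Qed.

Lemma w2C a b : w2 a b = - w2 b a.
Proof. by apply: z_inj; rewrite (ClinearN z_lin) !z_w2 varpiC. Qed.

Lemma w2xx a : w2 a a = 0.
Proof. by apply: z_inj; rewrite (Clinear0 z_lin) z_w2 varpixx. Qed.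

Definition dvarpi a b c : Lh :=
  dform nabH brA (varpi brA brL nabL brH nabH theta j) [:: a; b; c].

Lemma dvarpiE a b c : dvarpi a b c =
  nabH a (vp b c) - nabH b (vp a c) + nabH c (vp a b)
  - vp (brA a b) c + vp (brA a c) b - vp (brA b c) a.
Proof. exact: dform3. Qed.

Local Notation dw a b c := (dA act brA anc w [:: a; b; c]).

Lemma z_dw a b c : z (dw a b c) = dvarpi a b c.
Proof.
by rewrite /dA dform3 /w /= dvarpiE !(ClinearD z_lin, ClinearN z_lin) -!nabH_z !z_w2.
Qed.

Lemma dvarpi_iota l b c : dvarpi (iota l) b c = 0.
Proof.
rewrite dvarpiE nabH_iota_j -(z_w2 b c) brH_zr !varpi_iota.
rewrite (lieC A_lie (iota l) b) (lieC A_lie (iota l) c) -!iota_nabL !varpiNl !varpi_iota.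
rewrite (varpiC (brA b c) (iota l)) varpi_iota.
rewrite /dj !(nabHNr, nabHDr, nabH_br, nabL_br, ClinearD j_lin, ClinearN j_lin, opprK).
zmod_cancel.
Qed.

Lemma dvarpiC01 a b c : dvarpi b a c = - dvarpi a b c.
Proof. rewrite !dvarpiE (varpiC b a) (lieC A_lie b a) varpiNl !nabHNr; zmod_cancel. Qed.

Lemma dvarpiC12 a b c : dvarpi a c b = - dvarpi a b c.
Proof. rewrite !dvarpiE (varpiC c b) (lieC A_lie c b) varpiNl !nabHNr; zmod_cancel. Qed.

Lemma dvarpiD0 x y b c : dvarpi (x + y) b c = dvarpi x b c + dvarpi y b c.
Proof.
(* Folding varpi into z (w2 _ _) keeps nabHDr from unfolding it. *)
rewrite !dvarpiE -!z_w2.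
rewrite !(w2Dl, w2Dr, lieDl A_lie, lieDr A_lie, ClinearD z_lin, nabHDl, nabHDr).
zmod_cancel.
Qed.

Lemma dvarpiD1 a x y c : dvarpi a (x + y) c = dvarpi a x c + dvarpi a y c.
Proof. by rewrite dvarpiC01 dvarpiD0 opprD -!dvarpiC01. Qed.

Lemma dvarpiD2 a b x y : dvarpi a b (x + y) = dvarpi a b x + dvarpi a b y.
Proof. by rewrite dvarpiC12 dvarpiD1 opprD -!dvarpiC12. Qed.

Lemma dvarpi_iota1 l a c : dvarpi a (iota l) c = 0.
Proof. by rewrite dvarpiC01 dvarpi_iota oppr0. Qed.

Lemma dvarpi_iota2 l a b : dvarpi a b (iota l) = 0.
Proof. by rewrite dvarpiC12 dvarpi_iota1 oppr0. Qed.

Definition hor x := x - iota (theta x).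

Lemma theta_hor x : theta (hor x) = 0.
Proof. by rewrite /hor (ClinearB theta_lin) theta_iota subrr. Qed.

Lemma hor_decomp x : x = hor x + iota (theta x).
Proof. by rewrite /hor subrK. Qed.

Lemma horD x y : hor (x + y) = hor x + hor y.
Proof. rewrite /hor (ClinearD theta_lin) (ClinearD iota_lin); zmod_cancel. Qed.

Lemma horZ c x : hor (c *: x) = c *: hor x.
Proof. by rewrite /hor (ClinearZ theta_lin) (ClinearZ iota_lin) scalerBr. Qed.

Lemma dvarpi_hor a b c : dvarpi a b c = dvarpi (hor a) (hor b) (hor c).
Proof.
rewrite {1}(hor_decomp a) dvarpiD0 dvarpi_iota addr0.
rewrite {1}(hor_decomp b) dvarpiD1 dvarpi_iota1 addr0.
by rewrite {1}(hor_decomp c) dvarpiD2 dvarpi_iota2 addr0.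
Qed.

Lemma dvarpi_horizontal a b c : theta a = 0 -> theta b = 0 -> theta c = 0 ->
  dvarpi a b c = DJ c (theta (brA a b)) - DJ b (theta (brA a c)) + DJ a (theta (brA b c)).
Proof.
move=> ha hb hc; rewrite dvarpiE !varpiE ha hb hc.
rewrite !(dj0r, sigma0l, sigma0r) !(subrr, addr0, nabH0r); zmod_cancel.
Qed.

Local Notation FT a b := (Ftheta brA brL nabL theta [:: a; b]).
Local Notation DT := (dthj iota nabL nabH theta j).

Lemma FTE a b :
  FT a b = nabL a (theta b) - nabL b (theta a) - theta (brA a b) - brL (theta a) (theta b).
Proof. by rewrite /Ftheta dform2 /theta1. Qed.

Lemma FTDl x y b : FT (x + y) b = FT x b + FT y b.
Proof.
rewrite !FTE !(ClinearD theta_lin, nabLDl, nabLDr, lieDl A_lie, lieDl L_lie); zmod_cancel.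
Qed.

Lemma FTDr b x y : FT b (x + y) = FT b x + FT b y.
Proof.
rewrite !FTE !(ClinearD theta_lin, nabLDl, nabLDr, lieDr A_lie, lieDr L_lie); zmod_cancel.
Qed.

Lemma FT_iotal l b : FT (iota l) b = 0.
Proof.
rewrite FTE theta_iota nabL_iota (lieC A_lie (iota l) b) -iota_nabL (ClinearN theta_lin).
rewrite theta_iota; zmod_cancel.
Qed.

Lemma FT_iotar l a : FT a (iota l) = 0.
Proof.
rewrite FTE theta_iota nabL_iota -iota_nabL theta_iota (lieC L_lie (theta a) l).
zmod_cancel.
Qed.

Lemma FT_hor a b : FT a b = - theta (brA (hor a) (hor b)).
Proof.
rewrite {1}(hor_decomp a) FTDl FT_iotal addr0 {1}(hor_decomp b) FTDr FT_iotar addr0.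
rewrite FTE !theta_hor (additive0 (nabLDr _)) (additive0 (nabLDr _)) (lie0l L_lie).
zmod_cancel.
Qed.

Lemma FTZl c a b : FT (c *: a) b = c *: FT a b.
Proof.
rewrite !FT_hor horZ brAZl (ClinearB theta_lin) !(ClinearZ theta_lin) theta_hor.
by rewrite scaler0 subr0 scalerN.
Qed.

Lemma DTDl x y l : DT (x + y) l = DT x l + DT y l.
Proof. exact: (etrans (congr1 (DJ^~ l) (horD x y)) (djDl _ _ l)). Qed.

Lemma DTZl c x l : DT (c *: x) l = c *: DT x l.
Proof. exact: (etrans (congr1 (DJ^~ l) (horZ c x)) (djZl _ _ l)). Qed.

Lemma DTDr x l m : DT x (l + m) = DT x l + DT x m.
Proof. exact: djDr. Qed.

Lemma DTZr x c l : DT x (c *: l) = c *: DT x l.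
Proof. exact: djZr. Qed.

Local Notation pairDF a b c :=
  (pair12 (dthj iota nabL nabH theta j) (Ftheta brA brL nabL theta) [:: a; b; c]).

Lemma pairDFE a b c : pairDF a b c = DT a (FT b c) - DT b (FT a c) + DT c (FT a b).
Proof. by []. Qed.

Lemma dvarpi_pairDF a b c : dvarpi a b c = - pairDF a b c.
Proof.
rewrite dvarpi_hor dvarpi_horizontal ?theta_hor // pairDFE !FT_hor.
rewrite /dthj -/(hor a) -/(hor b) -/(hor c) !djNr; zmod_cancel.
Qed.

Lemma z_dw_pairDF a b c : z (dw a b c) = - pairDF a b c.
Proof. by rewrite z_dw dvarpi_pairDF. Qed.

Lemma dw_lin0 c x y b e : dw (c *: x + y) b e = c * dw x b e + dw y b e.
Proof.
apply: z_inj; rewrite (ClinearD z_lin (c * _)) (ClinearZ z_lin (c : C^o)) !z_dw_pairDF.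
rewrite pair12_linear0 => [|l|u|b'] /=; first by rewrite opprD scalerN.
all: move=> c' x' y'.
- by rewrite DTDl DTZl.
- by rewrite DTDr DTZr.
- by rewrite FTDl FTZl.
Qed.

Lemma dwC01 a b c : dw b a c = - dw a b c.
Proof. by apply: z_inj; rewrite (ClinearN z_lin) !z_dw dvarpiC01. Qed.

Lemma dwC12 a b c : dw a c b = - dw a b c.
Proof. by apply: z_inj; rewrite (ClinearN z_lin) !z_dw dvarpiC12. Qed.

Lemma dw_lin1 c x y a e : dw a (c *: x + y) e = c * dw a x e + dw a y e.
Proof. by rewrite dwC01 dw_lin0 opprD -mulrN -!dwC01. Qed.

Lemma dw_lin2 c x y a b : dw a b (c *: x + y) = c * dw a b x + dw a b y.
Proof. by rewrite dwC12 dw_lin1 opprD -mulrN -!dwC12. Qed.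

Lemma dw_iota0 l b c : dw (iota l) b c = 0.
Proof. by apply: z_inj; rewrite z_dw dvarpi_iota (Clinear0 z_lin). Qed.

Lemma dw_iota1 l a c : dw a (iota l) c = 0.
Proof. by rewrite dwC01 dw_iota0 oppr0. Qed.

Lemma dw_iota2 l a b : dw a b (iota l) = 0.
Proof. by rewrite dwC12 dw_iota1 oppr0. Qed.

Lemma dwxx01 x e : dw x x e = 0.
Proof. by apply: (@twice_eq0 R C C^o); rewrite {1}dwC01 addNr. Qed.

Lemma dwxx12 a x : dw a x x = 0.
Proof. by apply: (@twice_eq0 R C C^o); rewrite {1}dwC12 addNr. Qed.

Lemma dwxx02 x b : dw x b x = 0.
Proof. by rewrite dwC01 dwxx12 oppr0. Qed.

Lemma ddw a b c d : dA act brA anc (dA act brA anc w) [:: a; b; c; d] = 0.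
Proof.
apply: dformK2 => //.
- exact: actD.
- exact: act_br.
- exact: lieDl A_lie.
- exact: lieC A_lie.
- exact: lieJ A_lie.
- by move=> x y u; rewrite /w /= w2Dl.
- by move=> x y; rewrite /w /= w2C.
Qed.

Definition lift X := proj1_sig (constructive_indefinite_description _ (anc_onto X)).

Lemma anc_lift X : anc (lift X) = X.
Proof. exact: proj2_sig (constructive_indefinite_description _ (anc_onto X)). Qed.

Lemma anc_eq x y : anc x = anc y -> exists l, x = y + iota l.
Proof.
move=> exy; have /ker_anc [l xyl] : anc (x - y) = 0 by rewrite (ClinearB anc_lin) exy subrr.
by exists l; rewrite -xyl addrC subrK.
Qed.

Lemma lift_lin c X Y : exists l, lift (c *: X + Y) = c *: lift X + lift Y + iota l.
Proof. by apply: anc_eq; rewrite anc_lin !anc_lift. Qed.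

Lemma dw_add_iota0 a l b c : dw (a + iota l) b c = dw a b c.
Proof. by have := dw_lin0 1 a (iota l) b c; rewrite scale1r mul1r dw_iota0 addr0. Qed.

Lemma dw_add_iota1 a b l c : dw a (b + iota l) c = dw a b c.
Proof. by have := dw_lin1 1 b (iota l) a c; rewrite scale1r mul1r dw_iota1 addr0. Qed.

Lemma dw_add_iota2 a b c l : dw a b (c + iota l) = dw a b c.
Proof. by have := dw_lin2 1 c (iota l) a b; rewrite scale1r mul1r dw_iota2 addr0. Qed.

Lemma dw_lift a b c : dw (lift (anc a)) (lift (anc b)) (lift (anc c)) = dw a b c.
Proof.
have [la ->] := anc_eq (anc_lift (anc a)).
have [lb ->] := anc_eq (anc_lift (anc b)).
have [lc ->] := anc_eq (anc_lift (anc c)).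
by rewrite dw_add_iota0 dw_add_iota1 dw_add_iota2.
Qed.

Definition eta (t : seq TX) : C^o := dw (lift t`_0) (lift t`_1) (lift t`_2).

Lemma eta_kform : is_kform 3 eta.
Proof.
split=> [s1 s2 c X Y | s1 s2 s3 X].
  case: s1 => [|a1 [|a2 [|? ?]]]; case: s2 => [|b1 [|b2 [|? ?]]] //= _;
    rewrite /eta /=; have [l ->] := lift_lin c X Y.
  - by rewrite dw_add_iota0 dw_lin0.
  - by rewrite dw_add_iota1 dw_lin1.
  - by rewrite dw_add_iota2 dw_lin2.
case: s1 => [|? [|? ?]]; case: s2 => [|? [|? ?]]; case: s3 => [|? [|? ?]] //= _.
- exact: dwxx01.
- exact: dwxx02.
- exact: dwxx12.
Qed.

Lemma dN_eta_anc a b c d : dN act brX eta [:: anc a; anc b; anc c; anc d]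
  = dA act brA anc (dA act brA anc w) [:: a; b; c; d].
Proof. by rewrite /dN /dA !dform4 -!anc_br /eta /= !dw_lift. Qed.

Lemma eta_closed s : size s = 4%N -> dN act brX eta s = 0.
Proof.
case: s => [|X0 [|X1 [|X2 [|X3 [|? ?]]]]] //= _.
by rewrite -(anc_lift X0) -(anc_lift X1) -(anc_lift X2) -(anc_lift X3) dN_eta_anc ddw.
Qed.

Lemma eta_pullback s : size s = 3%N -> apull anc eta s = dA act brA anc w s.
Proof. by move/(size3E 0) ->; rewrite /apull /eta /= dw_lift. Qed.

Lemma eta_pair s : size s = 3%N ->
  z (apull anc eta s) = - pair12 DT (Ftheta brA brL nabL theta) s.
Proof. by move=> s3; rewrite eta_pullback // (size3E 0 s3) z_dw_pairDF. Qed.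

Lemma eta_unique eta' : (forall s, size s = 3%N -> apull anc eta' s = dA act brA anc w s) ->
  forall t, size t = 3%N -> eta' t = eta t.
Proof.
move=> eta'_pull t /(size3E 0) ->.
by have := eta'_pull [:: lift t`_0; lift t`_1; lift t`_2] erefl; rewrite /apull /= !anc_lift.
Qed.

Lemma w_kform : is_kform 2 w.
Proof.
split=> [s1 s2 c x y | s1 s2 s3 x].
  case: s1 => [|a1 [|? ?]]; case: s2 => [|b1 [|? ?]] //= _; rewrite /w /=.
  - by rewrite w2Dl w2Zl.
  - by rewrite w2Dr w2Zr.
by case: s1 => [|? ?]; case: s2 => [|? ?]; case: s3 => [|? ?] //= _; rewrite /w /= w2xx.
Qed.

Lemma z_w s : size s = 2%N -> z (w s) = varpi brA brL nabL brH nabH theta j s.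
Proof. by move/(size2E 0) ->; exact: z_w2. Qed.

Lemma varpi_pair_dj s : size s = 2%N ->
  varpi brA brL nabL brH nabH theta j s
  = pair11 DJ (theta1 theta) s + half_sigma_tt brL brH theta j s.
Proof. move/(size2E 0) ->; rewrite varpiE /pair11 /half_sigma_tt /theta1 /=; zmod_cancel. Qed.

Lemma varpi_pair_dthj s : size s = 2%N ->
  varpi brA brL nabL brH nabH theta j s
  = pair11 DT (theta1 theta) s - half_sigma_tt brL brH theta j s.
Proof.
move/(size2E 0) ->; rewrite varpiE /pair11 /half_sigma_tt /theta1 /dthj /=.
rewrite !(djDl, djNl) !dj_iota (sigmaC (theta _`_1)); zmod_cancel.
Qed.

Lemma dw_contract_iota l s : size s = 2%N -> contract (iota l) (dA act brA anc w) s = 0.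
Proof. by move/(size2E 0) ->; exact: dw_iota0. Qed.

Lemma dw_lie_iota l s : size s = 3%N -> lieA act brA anc (iota l) (dA act brA anc w) s = 0.
Proof.
move/(size3E 0) ->; rewrite /lieA /lieD (_ : contract _ _ _ = 0); last exact: ddw.
by rewrite dform3 /contract /= !dw_iota0 !act0; zmod_cancel.
Qed.

End CentralExtension.

Theorem proposition3p2 (R : realFieldType) (C : comAlgType R)
  (TX GA GL Lh : lmodType C)
  (act : TX -> C -> C) (brX : TX -> TX -> TX)
  (brA : GA -> GA -> GA) (anc : GA -> TX)
  (iota : GL -> GA) (brL : GL -> GL -> GL) (nabL : GA -> GL -> GL)
  (brH : Lh -> Lh -> Lh) (p : Lh -> GL) (z : C -> Lh) (nabH : GA -> Lh -> Lh)
  (theta : GA -> GL) (j : GL -> Lh) :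
  setting act brX brA anc iota brL nabL brH p z nabH theta j ->
  let vp := varpi brA brL nabL brH nabH theta j in
  exists w : seq GA -> C^o,
    is_kform 2 w
    /\ (forall s, size s = 2%N -> z (w s) = vp s)
    /\ (forall s, size s = 2%N ->
          vp s = pair11 (dj nabL nabH j) (theta1 theta) s
                 + half_sigma_tt brL brH theta j s)
    /\ (forall s, size s = 2%N ->
          vp s = pair11 (dthj iota nabL nabH theta j) (theta1 theta) s
                 - half_sigma_tt brL brH theta j s)
    /\ (forall l s, size s = 2%N -> contract (iota l) (dA act brA anc w) s = 0)
    /\ (forall l s, size s = 3%N -> lieA act brA anc (iota l) (dA act brA anc w) s = 0)
    /\ (exists eta : seq TX -> C^o,
          is_kform 3 eta
          /\ (forall s, size s = 4%N -> dN act brX eta s = 0)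
          /\ (forall s, size s = 3%N -> apull anc eta s = dA act brA anc w s)
          /\ (forall s, size s = 3%N ->
                z (apull anc eta s)
                = - pair12 (dthj iota nabL nabH theta j) (Ftheta brA brL nabL theta) s)
          /\ (forall eta' : seq TX -> C^o,
                is_kform 3 eta'
                -> (forall s, size s = 4%N -> dN act brX eta' s = 0)
                -> (forall s, size s = 3%N -> apull anc eta' s = dA act brA anc w s)
                -> forall t, size t = 3%N -> eta' t = eta t))
    /\ (forall (l : GL) (x : GA), vp [:: iota l; x] = - dj nabL nabH j x l).
Proof.
move=> Hs vp; exists (w Hs).
split; first exact: w_kform.
split; first exact: z_w.
split; first exact: (varpi_pair_dj Hs).
split; first exact: (varpi_pair_dthj Hs).
split; first exact: dw_contract_iota.
split; first exact: dw_lie_iota.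
split; last exact: (varpi_iota Hs).
exists (eta Hs); split; first exact: eta_kform.
split; first exact: eta_closed.
split; first exact: eta_pullback.
split; first exact: eta_pair.
by move=> eta' _ _; exact: eta_unique.
Qed.
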